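(* Let $M$ be a binary matroid. Then $P(M)$ has no nontrivial hyperplane split.
   Context: A matroid is binary if it is representable over $\mathbb{F}_2$. For a matroid $N$ on $E=\{1,\dots,n\}$, $P(N)=\mathrm{conv}\{\sum_{i\in B}e_i : B \text{ a base of } N\}\subset\mathbb{R}^n$. A hyperplane split of $P(N)$ is an expression $P(N)=P(N_1)\cup P(N_2)$ with $N_1,N_2$ matroids on $E$ such that $P(N_1)\cap P(N_2)$ is a face of both $P(N_1)$ and $P(N_2)$; it is nontrivial if $P(N_1)\neq P(N)$ and $P(N_2)\neq P(N)$. *)

From HB Require Import structures.
From mathcomp Require Import all_boot all_order all_algebra.
Unset Printing Implicit Defensive.
Import Order.TTheory GRing.Theory Num.Theory.
Local Open Scope ring_scope.

(* A matroid on the ground set E = 'I_n, given by its family of bases. *)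
Definition is_matroid (n : nat) (Bs : {set {set 'I_n}}) : Prop :=
  Bs != set0 /\
  forall B1 B2, B1 \in Bs -> B2 \in Bs ->
    forall x, x \in B1 :\: B2 ->
      exists2 y, y \in B2 :\: B1 & (y |: (B1 :\ x)) \in Bs.

(* Binary: representable over F_2 — there is a matrix A over F_2 whose
   columns are indexed by E such that the bases are exactly the sets of
   columns forming a basis of the column space of A (i.e. linearly
   independent and of cardinality rank A). *)
Definition binary (n : nat) (Bs : {set {set 'I_n}}) : Prop :=
  exists (r : nat) (A : 'M['F_2]_(r, n)),
    forall B : {set 'I_n},
      B \in Bs <->
      (\rank (colsub (@enum_val _ (pred_of_set B)) A) = #|B|%N /\
       #|B|%N = \rank A).

Definition indic (R : realFieldType) (n : nat) (B : {set 'I_n}) : 'rV[R]_n :=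
  \row_i (if i \in B then 1 else 0).

(* Base polytope P(N) = conv { indic B : B base of N }, as a predicate. *)
Definition base_polytope (R : realFieldType) (n : nat) (Bs : {set {set 'I_n}})
  (x : 'rV[R]_n) : Prop :=
  exists lam : {set 'I_n} -> R,
    (forall B, 0 <= lam B) /\ (forall B, B \notin Bs -> lam B = 0) /\
    \sum_B lam B = 1 /\ x = \sum_B lam B *: indic R n B.

Definition dotv (R : realFieldType) (n : nat) (c x : 'rV[R]_n) : R :=
  \sum_i c 0 i * x 0 i.

(* F is a face of the set P: F = P ∩ {c.x = b} for a valid inequality c.x <= b
   (the empty set and P itself are faces). *)
Definition is_face (R : realFieldType) (n : nat) (F P : 'rV[R]_n -> Prop) : Prop :=
  exists (c : 'rV[R]_n) (b : R),
    (forall x, P x -> dotv R n c x <= b) /\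
    (forall x, F x <-> (P x /\ dotv R n c x = b)).

Definition hyperplane_split (R : realFieldType) (n : nat)
  (N N1 N2 : {set {set 'I_n}}) : Prop :=
  @is_matroid n N1 /\ @is_matroid n N2 /\
  (forall x, base_polytope R n N x <-> base_polytope R n N1 x \/ base_polytope R n N2 x) /\
  is_face R n (fun x => base_polytope R n N1 x /\ base_polytope R n N2 x) (base_polytope R n N1) /\
  is_face R n (fun x => base_polytope R n N1 x /\ base_polytope R n N2 x) (base_polytope R n N2).

Definition same_set (R : realFieldType) (n : nat) (P Q : 'rV[R]_n -> Prop) : Prop :=
  forall x, P x <-> Q x.

Definition nontrivial_split (R : realFieldType) (n : nat)
  (N N1 N2 : {set {set 'I_n}}) : Prop :=
  hyperplane_split R n N N1 N2 /\
  ~ same_set R n (base_polytope R n N1) (base_polytope R n N) /\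
  ~ same_set R n (base_polytope R n N2) (base_polytope R n N).

From HB Require Import structures.
From mathcomp Require Import all_boot all_order all_algebra.
Set Implicit Arguments. Unset Strict Implicit. Unset Printing Implicit Defensive.
Import Order.TTheory GRing.Theory Num.Theory.
Local Open Scope ring_scope.

(* Suppose P(M) = P(N1) \/ P(N2) is a nontrivial split, M binary.
   - Vertices: the 0/1 points of P(N) are the indicators of the bases of N, so
     the bases of M are those of N1 together with those of N2, and there are
     bases a0 of N1 only and c0 of N2 only.
   - Edges: a base of N1 only is never adjacent (one exchange) to a base of N2
     only, as the midpoint of that edge of P(M) would lie in neither piece.
   - Binarity: over F_2, four columns p1, p2, q1, q2 completing K cannot give
     six bases (no U_{2,4} minor); combined with the edge property this shows
     that no base has a neighbour in N1 only and another in N2 only.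
   - Walking from a0 towards c0 gives a common base m adjacent to a base of N1
     only; all N2-neighbours of m are then in N1.  The inequality defining the
     face P(N1) /\ P(N2) of P(N2) is thus tight at m and at all its neighbours
     in N2, hence on all of P(N2) (an exchange argument on weights), so every
     base of N2 is in N1, contradicting c0. *)

Section ColumnSpans.
Variables (F : fieldType) (r n : nat) (A : 'M[F]_(r, n)).

Definition col_vec (i : 'I_n) : 'rV[F]_r := row i A^T.
Definition col_span (S : {set 'I_n}) : 'M[F]_r := (\sum_(i in S) <<col_vec i>>)%MS.

Definition col_basis (S : {set 'I_n}) : Prop :=
  \rank (col_span S) = #|S| /\ #|S| = \rank A.

(* The rank of a column submatrix is the dimension of the span of its columns;
   this translates the matrix formulation of [binary] into spans. *)
Lemma rank_colsub_span (B : {set 'I_n}) :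
  \rank (colsub (@enum_val _ (pred_of_set B)) A) = \rank (col_span B).
Proof.
rewrite -mxrank_tr.
have -> : (colsub (@enum_val _ (pred_of_set B)) A)^T
          = rowsub (@enum_val _ (pred_of_set B)) A^T.
  by apply/matrixP => i j; rewrite !mxE.
apply/eqP; rewrite eqn_leq; apply/andP; split; apply: mxrankS.
  apply/row_subP => j; rewrite row_rowsub.
  apply: (sumsmx_sup (enum_val j)); first exact: enum_valP.
  by rewrite genmxE.
apply/sumsmx_subP => i Hi; rewrite genmxE /col_vec.
by rewrite -(enum_rankK_in Hi Hi) -row_rowsub; apply: row_sub.
Qed.

Lemma rank_col_span_le (S : {set 'I_n}) : (\rank (col_span S) <= #|S|)%N.
Proof.
rewrite /col_span -sum1_card.
apply: (big_rec2 (fun (V : 'M_r) (k : nat) => \rank V <= k)%N).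
  by rewrite mxrank0.
move=> i V k _ HV; apply: leq_trans (mxrank_adds_leqif _ _).1 _.
by rewrite mxrank_gen leq_add // rank_leq_row.
Qed.

Lemma col_span_setU1 (u : 'I_n) (K : {set 'I_n}) : u \notin K ->
  col_span (u |: K) = (<<col_vec u>> + col_span K)%MS.
Proof. by move=> uK; rewrite /col_span big_setU1. Qed.

Lemma indep_col_notin_span (K : {set 'I_n}) u w :
  u \notin K -> w \notin K -> u != w ->
  \rank (col_span (u |: (w |: K))) = #|u |: (w |: K)| ->
  ~~ (col_vec u <= col_span K + <<col_vec w>>)%MS.
Proof.
move=> uK wK uw; rewrite col_span_setU1; last by rewrite !inE negb_or uw.
rewrite col_span_setU1 // cardsU1 cardsU1 !inE negb_or uw uK wK /= => Hrank.
apply/negP => Hsub.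
have Hle : (<<col_vec u>> + (<<col_vec w>> + col_span K)
             <= col_span K + <<col_vec w>>)%MS.
  by rewrite addsmx_sub genmxE Hsub /= addsmxC.
have := leq_trans (mxrankS Hle) (mxrank_adds_leqif (col_span K) <<col_vec w>>%MS).1.
rewrite Hrank mxrank_gen => Hbad.
have := leq_trans Hbad (leq_add (rank_col_span_le K) (rank_leq_row (col_vec w))).
by rewrite addnC ltnn.
Qed.

Lemma col_span_full (S : {set 'I_n}) : \rank (col_span S) = \rank A ->
  forall i, (col_vec i <= col_span S)%MS.
Proof.
move=> Hrank i.
have HS : (col_span S <= A^T)%MS.
  by apply/sumsmx_subP => j _; rewrite genmxE /col_vec row_sub.
have HT : (A^T <= col_span S)%MS.
  by rewrite -(mxrank_leqif_sup HS).2 mxrank_tr Hrank.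
exact: submx_trans (row_sub _ _) HT.
Qed.

End ColumnSpans.

Lemma F2_cases (a : 'F_2) : a = 0 \/ a = 1.
Proof. by case: a => [[|[|m]] Hm]; [left|right|]; rewrite //; apply: val_inj. Qed.

Section BinaryExchange.
Variables (r n : nat) (A : 'M['F_2]_(r, n)).

Lemma F2_coordinates (K : {set 'I_n}) p1 p2 q :
  p1 \notin p2 |: K -> p2 \notin K ->
  \rank (col_span A (p1 |: (p2 |: K))) = \rank A ->
  ~~ (col_vec A q <= col_span A K + <<col_vec A p2>>)%MS ->
  ~~ (col_vec A q <= col_span A K + <<col_vec A p1>>)%MS ->
  exists2 k, (k <= col_span A K)%MS & col_vec A q = col_vec A p1 + col_vec A p2 + k.
Proof.
move=> p1n p2K Hrank N2 N1.
have := col_span_full Hrank q; rewrite col_span_setU1 // col_span_setU1 //.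
case/sub_addsmxP => u Hq.
have /sub_rVP [al Hal] : (u.1 *m <<col_vec A p1>> <= col_vec A p1)%MS.
  by apply: submx_trans (submxMl _ _) _; rewrite genmxE.
case/sub_addsmxP: (submxMl u.2 (<<col_vec A p2>> + col_span A K)%MS) => u' Hu2.
have /sub_rVP [be Hbe] : (u'.1 *m <<col_vec A p2>> <= col_vec A p2)%MS.
  by apply: submx_trans (submxMl _ _) _; rewrite genmxE.
rewrite Hu2 Hal Hbe in Hq.
have [Ha|Ha] := F2_cases al.
  case/negP: N2; rewrite Hq Ha scale0r add0r addsmxC.
  by rewrite addmx_sub_adds ?submxMl // scalemx_sub // genmxE.
have [Hb|Hb] := F2_cases be.
  case/negP: N1; rewrite Hq Hb scale0r add0r addsmxC.
  by rewrite addmx_sub_adds ?submxMl // scalemx_sub // genmxE.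
by exists (u'.2 *m col_span A K); rewrite ?submxMl // Hq Ha Hb !scale1r addrA.
Qed.

(* Binary matroids have no U_{2,4}-minor: for four columns p1, p2, q1, q2
   outside K, the six sets K + {s, t} with {s, t} a pair among them cannot all
   be bases.  Indeed q1 and q2 both equal p1 + p2 modulo span K, so q1 - q2
   lies in span K, contradicting the independence of K + {q1, q2}. *)
Lemma binary_no_U24 (K : {set 'I_n}) p1 p2 q1 q2 :
  p1 \notin K -> p2 \notin K -> q1 \notin K -> q2 \notin K ->
  p1 != p2 -> q1 != q2 -> p1 != q1 -> p1 != q2 -> p2 != q1 -> p2 != q2 ->
  col_basis A (p1 |: (p2 |: K)) -> col_basis A (q1 |: (q2 |: K)) ->
  col_basis A (q1 |: (p1 |: K)) -> col_basis A (q1 |: (p2 |: K)) ->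
  col_basis A (q2 |: (p1 |: K)) -> col_basis A (q2 |: (p2 |: K)) -> False.
Proof.
move=> p1K p2K q1K q2K p12 q12 p1q1 p1q2 p2q1 p2q2 [Hp Hpr] [Hq _]
  [H11 _] [H12 _] [H21 _] [H22 _].
have q1p1 : q1 != p1 by rewrite eq_sym.
have q1p2 : q1 != p2 by rewrite eq_sym.
have q2p1 : q2 != p1 by rewrite eq_sym.
have q2p2 : q2 != p2 by rewrite eq_sym.
have p1n : p1 \notin p2 |: K by rewrite !inE negb_or p12.
have Hfull : \rank (col_span A (p1 |: (p2 |: K))) = \rank A by rewrite Hp Hpr.
have [k1 Hk1 E1] := F2_coordinates p1n p2K Hfull
  (indep_col_notin_span q1K p2K q1p2 H12) (indep_col_notin_span q1K p1K q1p1 H11).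
have [k2 Hk2 E2] := F2_coordinates p1n p2K Hfull
  (indep_col_notin_span q2K p2K q2p2 H22) (indep_col_notin_span q2K p1K q2p1 H21).
have /negP := indep_col_notin_span q1K q2K q12 Hq; apply.
have -> : col_vec A q1 = (k1 - k2) + col_vec A q2 by rewrite E1 E2 [RHS]addrCA subrK.
by rewrite addmx_sub_adds ?genmxE // addmx_sub // eqmx_opp.
Qed.

End BinaryExchange.

Lemma exchange_reverse n (a : {set 'I_n}) x y : x \in a -> y \notin a ->
  [/\ y \in y |: (a :\ x), x \notin y |: (a :\ x) & a = x |: ((y |: (a :\ x)) :\ y)].
Proof.
move=> Hx Hy; have xy : x != y by apply: contraNneq Hy => <-.
split; first by rewrite setU11.
  by rewrite !inE eqxx (negbTE xy).
by rewrite setU1K ?setD1K // !inE negb_and Hy orbT.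
Qed.

Lemma exchange_closer n (D m : {set 'I_n}) x y : y \in D :\: m -> x \in m ->
  #|(x |: (D :\ y)) :\: m| = #|D :\: m|.-1.
Proof.
move=> Hy Hx; rewrite (cardsD1 y (D :\: m)) Hy add1n /=.
apply: eq_card => i; rewrite !inE.
case: (eqVneq i x) => [->|_]; first by rewrite Hx !andbF.
by rewrite andbCA.
Qed.

Lemma mem_setU2_diff (T : finType) (y u w : T) (K L : {set T}) :
  y \in (u |: (w |: K)) :\: L -> K \subset L -> y = u \/ y = w.
Proof.
rewrite !inE => /andP [yL /orP [/eqP ->|/orP [/eqP ->|yK]]] KL; [by left|by right|].
by rewrite (subsetP KL _ yK) in yL.
Qed.

Section MatroidBases.
Variables (n : nat) (N : {set {set 'I_n}}).
Hypothesis HN : is_matroid n N.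

Lemma base_subset_eq B1 B2 : B1 \in N -> B2 \in N -> B1 \subset B2 -> B1 = B2.
Proof.
case: HN => _ Hex H1 H2 Hsub; apply/eqP; rewrite eqEsubset Hsub /=.
apply/subsetP => x Hx; apply/negPn/negP => Hn.
have Hx' : x \in B2 :\: B1 by rewrite inE Hn.
have [y] := Hex _ _ H2 H1 x Hx'.
by rewrite inE => /andP [/negP yB1 /(subsetP Hsub)].
Qed.

Lemma base_diff0_eq B1 B2 : B1 \in N -> B2 \in N -> B1 :\: B2 = set0 -> B1 = B2.
Proof.
move=> H1 H2 H0; apply: base_subset_eq => //.
by rewrite -setD_eq0 H0.
Qed.

Lemma exchange_two_points (K : {set 'I_n}) u w s t :
  u \notin K -> u != w -> u != s -> u != t ->
  u |: (w |: K) \in N -> s |: (t |: K) \in N ->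
  s |: (w |: K) \in N \/ t |: (w |: K) \in N.
Proof.
move=> uK uw us ut H1 H2; case: HN => _ Hex.
have Hu : u \in (u |: (w |: K)) :\: (s |: (t |: K)).
  by rewrite !inE eqxx /= !negb_or us ut uK.
have [y Hy Hexch] := Hex _ _ H1 H2 u Hu.
rewrite setU1K ?inE ?negb_or ?uw // in Hexch.
have Ksub : K \subset u |: (w |: K) by apply/subsetP => i Hi; rewrite !inE Hi !orbT.
by case: (mem_setU2_diff Hy Ksub) => Ey; rewrite Ey in Hexch; [left|right].
Qed.

(* A base B squeezed between a base a and its neighbour c = a - x + y, and
   containing y, must be c itself (otherwise x \in B would force B = a). *)
Lemma base_between_neighbours a B x y :
  a \in N -> B \in N -> x \in a -> y \notin a -> y \in B ->
  a :&: (y |: (a :\ x)) \subset B -> B \subset a :|: (y |: (a :\ x)) ->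
  B = y |: (a :\ x).
Proof.
move=> Ha HB xa ya yB capB Bcup.
have xB : x \notin B.
  apply/negP => xB; suff Ea : a = B by move: ya; rewrite Ea yB.
  apply: base_subset_eq => //; apply/subsetP => i ia.
  case: (eqVneq i x) => [-> //|ix].
  by apply: (subsetP capB); rewrite !inE ix ia orbT.
apply/eqP; rewrite eqEsubset; apply/andP; split; apply/subsetP => i iB.
  have := subsetP Bcup i iB; rewrite !inE.
  case: (eqVneq i x) => [Ei|ix]; first by rewrite -Ei iB in xB.
  by case: (i \in a); rewrite /= ?orbT ?orbF.
move: (iB); rewrite !inE => /orP [/eqP -> //|/andP [ix ia]].
by apply: (subsetP capB); rewrite !inE ix ia orbT.
Qed.
End MatroidBases.

(* Let every base of the matroid N be a base of the matroid M, let p1 p2 K be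
   a base of N and q1 q2 K a base of M outside N, and suppose q2 p2 K is not a
   base of M.  Then q1 p2 K and q2 p1 K cannot both be bases of N whenever
   they are bases of M: exchanges in M show that they are bases of M, and an
   exchange in N between them would yield q1 q2 K or q2 p2 K in N. *)
Lemma submatroid_square n (M N : {set {set 'I_n}}) (K : {set 'I_n}) p1 p2 q1 q2 :
  is_matroid n M -> is_matroid n N -> {subset N <= M} ->
  p1 \notin K -> q1 \notin K ->
  p1 != p2 -> p1 != q1 -> p1 != q2 -> q1 != q2 -> q1 != p2 ->
  p1 |: (p2 |: K) \in N -> q1 |: (q2 |: K) \in M -> q1 |: (q2 |: K) \notin N ->
  q2 |: (p2 |: K) \notin M ->
  (q1 |: (p2 |: K) \in M -> q1 |: (p2 |: K) \in N) ->
  (q2 |: (p1 |: K) \in M -> q2 |: (p1 |: K) \in N) -> False.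
Proof.
move=> HM HN NM p1K q1K p12 p1q1 p1q2 q12 q1p2 Ha Hc HcN HQ to_N1 to_N2.
have q1p1 : q1 != p1 by rewrite eq_sym.
have [H12|] := exchange_two_points HM p1K p12 p1q1 p1q2 (NM _ Ha) Hc.
  have [H21|] := exchange_two_points HM q1K q12 q1p1 q1p2 Hc (NM _ Ha).
    have H12N := to_N1 H12; rewrite setUCA in H21; have H21N := to_N2 H21.
    rewrite setUCA in H21N.
    have [|/NM] := exchange_two_points HN p1K p1q2 p1q1 p12 H21N H12N.
      by rewrite (negbTE HcN).
    by rewrite setUCA (negbTE HQ).
  by rewrite setUCA (negbTE HQ).
by rewrite (negbTE HQ).
Qed.

Definition weight (R : realFieldType) n (w : 'I_n -> R) (D : {set 'I_n}) : R :=
  \sum_(i in D) w i.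

Lemma weight_exchange (R : realFieldType) n (w : 'I_n -> R) (m : {set 'I_n}) x y :
  x \in m -> y \notin m -> weight w (y |: (m :\ x)) = weight w m - w x + w y.
Proof.
move=> Hx Hy; rewrite /weight big_setU1 /=; last by rewrite !inE negb_and Hy orbT.
by rewrite (big_setD1 x Hx) /= [w x + _]addrC addrK addrC.
Qed.

Section LocalMaximum.
(* A base m of maximal weight W all of whose neighbours (single exchanges)
   also have weight W: then every base has weight W.  This is the
   combinatorial form of "a face of P(N) containing a vertex and all edges
   at that vertex is all of P(N)". *)
Variables (R : realFieldType) (n : nat) (N : {set {set 'I_n}}).
Variables (w : 'I_n -> R) (W : R) (m : {set 'I_n}).
Hypotheses (HN : is_matroid n N) (Hmax : forall D, D \in N -> weight w D <= W).
Hypotheses (Hm : m \in N) (HmW : weight w m = W).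
Hypothesis Hnb : forall x y, x \in m -> y \notin m -> y |: (m :\ x) \in N ->
  weight w (y |: (m :\ x)) = W.

Lemma neighbour_same_weight D x : D \in N -> x \in m :\: D ->
  exists2 y, y \in D :\: m & w y = w x.
Proof.
move=> HD Hx; case: HN => _ Hex.
have [y Hy HS] := Hex _ _ Hm HD x Hx; exists y => //.
have /setDP [xm _] := Hx; have /setDP [_ ym] := Hy.
have := Hnb xm ym HS; rewrite weight_exchange // HmW => E.
by apply: (@addrI _ (W - w x)); rewrite E subrK.
Qed.

Lemma all_bases_max_weight D : D \in N -> weight w D = W.
Proof.
move: {2}#|D :\: m| (leqnn #|D :\: m|) => k; elim: k D => [|k IH] D Hk HD.
  by rewrite (base_diff0_eq HN HD Hm) //; apply/eqP; rewrite -cards_eq0 -leqn0.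
have [H0|[y0 Hy0]] := set_0Vmem (D :\: m).
  by rewrite (base_diff0_eq HN HD Hm H0).
have [y Hy Hymax] := arg_maxP w Hy0.
case: HN => _ Hex; have [x Hx HD'] := Hex _ _ HD Hm y Hy.
have /setDP [xD xm] := Hx.
have HD'W : weight w (x |: (D :\ y)) = W.
  apply: IH HD'; rewrite exchange_closer //.
  by rewrite -ltnS prednK ?(leq_trans _ Hk) // card_gt0; apply/set0Pn; exists y.
have [y' Hy' Ewy'] := neighbour_same_weight HD Hx.
have Hxy : w x <= w y by rewrite -Ewy'; apply: Hymax.
have /setDP [yD _] : y \in D :\: m := Hy.
apply/eqP; rewrite eq_le Hmax //= -HD'W weight_exchange ?inE ?eqxx //.
by rewrite -addrA gerDl addrC subr_le0.
Qed.
End LocalMaximum.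

Section BasePolytope.
Variables (R : realFieldType) (n : nat).
Implicit Types (N : {set {set 'I_n}}) (B D : {set 'I_n}).

Definition bit (i : 'I_n) B : R := if i \in B then 1 else 0.

Lemma indicE D i : indic R n D 0 i = bit i D.
Proof. by rewrite mxE. Qed.

Lemma combination_coord (lam : {set 'I_n} -> R) (x : 'rV[R]_n) i :
  x = \sum_B lam B *: indic R n B -> x 0 i = \sum_B lam B * bit i B.
Proof. by move=> ->; rewrite summxE; apply: eq_bigr => B _; rewrite !mxE. Qed.

Lemma sum_delta (T : finType) (D : T) (c : R) :
  \sum_(B : T) (if B == D then c else 0) = c.
Proof. by rewrite (bigD1 D) //= eqxx big1 ?addr0 // => B /negbTE ->. Qed.

Lemma sum_delta_scale (T : finType) (D : T) (c : R) (f : T -> 'rV[R]_n) :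
  \sum_(B : T) (if B == D then c else 0) *: f B = c *: f D.
Proof.
by rewrite (bigD1 D) //= eqxx big1 ?addr0 // => B /negbTE ->; rewrite scale0r.
Qed.

Lemma indic_in_polytope N D : D \in N -> base_polytope R n N (indic R n D).
Proof.
move=> HD; exists (fun B => if B == D then 1 else 0); split.
  by move=> B; case: ifP.
split; first by move=> B HB; case: eqP => // E; rewrite E HD in HB.
by rewrite sum_delta sum_delta_scale scale1r.
Qed.

Definition midpoint D1 D2 : 'rV[R]_n := 2^-1 *: (indic R n D1 + indic R n D2).

Lemma half_half : (2^-1 + 2^-1 : R) = 1.
Proof. by rewrite -mulr2n -[_ *+ 2]mulr_natr mulVf // pnatr_eq0. Qed.

Lemma midpointE D1 D2 i : midpoint D1 D2 0 i = 2^-1 * (bit i D1 + bit i D2).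
Proof. by rewrite /midpoint !mxE. Qed.

Lemma midpoint_in_polytope N D1 D2 :
  D1 \in N -> D2 \in N -> base_polytope R n N (midpoint D1 D2).
Proof.
move=> H1 H2.
exists (fun B => (if B == D1 then 2^-1 else 0) + (if B == D2 then 2^-1 else 0)).
split.
  by move=> B; apply: addr_ge0; case: ifP => // _; rewrite invr_ge0.
split.
  move=> B HB; case: eqP => [E|_]; first by rewrite E H1 in HB.
  by case: eqP => [E|_]; [rewrite E H2 in HB| rewrite addr0].
rewrite big_split /= !sum_delta half_half; split => //.
under eq_bigr do rewrite scalerDl.
by rewrite big_split /= !sum_delta_scale /midpoint scalerDr.
Qed.

Lemma support_coord1 (x : 'rV[R]_n) lam i :
  (forall B, 0 <= lam B) -> \sum_B lam B = 1 -> x = \sum_B lam B *: indic R n B ->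
  x 0 i = 1 -> forall B, lam B != 0 -> i \in B.
Proof.
move=> lam_ge0 lam_sum1 Hx Hi.
have E : \sum_B lam B * (1 - bit i B) = 0.
  under eq_bigr do rewrite mulrBr mulr1.
  by rewrite sumrB lam_sum1 -(combination_coord i Hx) Hi subrr.
have terms_ge0 C : true -> 0 <= lam C * (1 - bit i C).
  by move=> _; rewrite mulr_ge0 // /bit; case: ifP; rewrite ?subrr ?subr0.
move=> B HB; apply/negPn/negP => iB.
have := psumr_eq0P terms_ge0 E (i := B) isT.
by rewrite /bit (negbTE iB) subr0 mulr1 => /eqP; rewrite (negbTE HB).
Qed.

Lemma support_coord0 (x : 'rV[R]_n) lam i :
  (forall B, 0 <= lam B) -> x = \sum_B lam B *: indic R n B ->
  x 0 i = 0 -> forall B, lam B != 0 -> i \notin B.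
Proof.
move=> lam_ge0 Hx Hi.
have E : \sum_B lam B * bit i B = 0 by rewrite -(combination_coord i Hx).
have terms_ge0 C : true -> 0 <= lam C * bit i C.
  by move=> _; rewrite mulr_ge0 // /bit; case: ifP.
move=> B HB; apply/negP => iB.
have := psumr_eq0P terms_ge0 E (i := B) isT.
by rewrite /bit iB mulr1 => /eqP; rewrite (negbTE HB).
Qed.

Lemma indic_in_polytopeP N D : base_polytope R n N (indic R n D) -> D \in N.
Proof.
case=> lam [lam_ge0 [lam_out [lam_sum1 Hx]]].
have [B0 HB0] : exists B, lam B != 0.
  case: (pickP (fun B => lam B != 0)) => [B0 HB0|Hn]; first by exists B0.
  move: lam_sum1; rewrite big1 => [/eqP|B _]; first by rewrite eq_sym oner_eq0.
  by have /negbFE/eqP := Hn B.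
suff <- : B0 = D by apply: contraNT HB0 => /lam_out ->.
apply/setP => i; case Hi: (i \in D).
  by apply: (support_coord1 lam_ge0 lam_sum1 Hx) HB0; rewrite indicE /bit Hi.
by apply/negbTE; apply: (support_coord0 lam_ge0 Hx _ HB0); rewrite indicE /bit Hi.
Qed.

(* If a is a base of N and its neighbour c = a - x + y is not, the midpoint of
   the segment [a, c] is outside P(N): every base in the support of a convex
   combination giving it lies between a and c, hence equals a, so its y-th
   coordinate would be 0 instead of 1/2. *)
Lemma midpoint_notin_polytope N a x y :
  is_matroid n N -> a \in N -> y |: (a :\ x) \notin N -> x \in a -> y \notin a ->
  ~ base_polytope R n N (midpoint a (y |: (a :\ x))).
Proof.
set c := y |: (a :\ x) => HN Ha Hc xa ya [lam [lam_ge0 [lam_out [lam_sum1 Hmid]]]].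
have supp_y : forall B, lam B != 0 -> y \notin B.
  move=> B HB; apply: contraNN Hc => yB.
  have BN : B \in N by apply: contraNT HB => /lam_out ->.
  suff <- : B = c by [].
  apply: (base_between_neighbours HN Ha BN xa ya yB).
    apply/subsetP => i; rewrite inE => /andP [ia ic].
    by apply: (support_coord1 lam_ge0 lam_sum1 Hmid _ HB);
      rewrite midpointE /bit ia ic mulrDr mulr1 half_half.
  apply/subsetP => i iB; apply/negPn/negP; rewrite inE negb_or => /andP [ia ic].
  have i0 : midpoint a c 0 i = 0.
    by rewrite midpointE /bit (negbTE ia) (negbTE ic) addr0 mulr0.
  by rewrite (negbTE (support_coord0 lam_ge0 Hmid i0 HB)) in iB.
have : midpoint a c 0 y = 0.
  rewrite (combination_coord y Hmid) big1 // => B _.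
  have [->|HB] := eqVneq (lam B) 0; first by rewrite mul0r.
  by rewrite /bit (negbTE (supp_y B HB)) mulr0.
rewrite midpointE /bit (negbTE ya) setU11 add0r mulr1 => /eqP.
by rewrite invr_eq0 pnatr_eq0.
Qed.

Lemma dotv_indic (c : 'rV[R]_n) D : dotv R n c (indic R n D) = weight (fun i => c 0 i) D.
Proof.
rewrite /dotv /weight [in RHS]big_mkcond; apply: eq_bigr => i _; rewrite mxE.
by case: ifP; rewrite ?mulr1 ?mulr0.
Qed.

Lemma polytope_ne_base M N1 :
  (forall x, base_polytope R n N1 x -> base_polytope R n M x) ->
  ~ same_set R n (base_polytope R n N1) (base_polytope R n M) ->
  exists2 c, c \in M & c \notin N1.
Proof.
move=> N1M Hne; have [/exists_inP //|/exists_inPn MN1] := boolP [exists c in M, c \notin N1].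
case: Hne => x; split; first exact: N1M.
case=> lam [lam_ge0 [lam_out Hx]]; exists lam; split => //; split => // B BN1.
by apply: lam_out; apply: contra BN1 => /MN1; rewrite negbK.
Qed.
End BasePolytope.

(* Throughout, P(M) = P(N1) \/ P(N2) for matroids M, N1, N2; "N1 only" means
   "in N1 and not in N2". *)
Section Split.
Variables (R : realFieldType) (n : nat) (M N1 N2 : {set {set 'I_n}}).
Hypotheses (HM : is_matroid n M) (HN1 : is_matroid n N1) (HN2 : is_matroid n N2).
Hypothesis Hcov : forall x,
  base_polytope R n M x <-> base_polytope R n N1 x \/ base_polytope R n N2 x.

Lemma base_N1_in_M : {subset N1 <= M}.
Proof.
by move=> D HD; apply: (@indic_in_polytopeP R); apply/Hcov; left;
  apply: indic_in_polytope.
Qed.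

Lemma base_N2_in_M : {subset N2 <= M}.
Proof.
by move=> D HD; apply: (@indic_in_polytopeP R); apply/Hcov; right;
  apply: indic_in_polytope.
Qed.

Lemma base_M_in_N1_or_N2 D : D \in M -> D \in N1 \/ D \in N2.
Proof.
move=> HD; case: (proj1 (Hcov _) (indic_in_polytope R HD)) => /indic_in_polytopeP;
  by [left|right].
Qed.

(* Edges: no single exchange leads from a base of N1 only to a base of N2
   only, since the midpoint of that edge of P(M) would lie in neither
   P(N1) nor P(N2). *)
Lemma no_exchange_across a c x y : a \in N1 -> a \notin N2 -> c \in N2 -> c \notin N1 ->
  x \in a -> y \notin a -> c = y |: (a :\ x) -> False.
Proof.
move=> Ha1 Ha2 Hc2 Hc1 xa ya Ec.
have [yc xc Ea] := exchange_reverse xa ya; rewrite -Ec in yc xc Ea.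
have := midpoint_in_polytope R (base_N1_in_M Ha1) (base_N2_in_M Hc2).
case/Hcov; first by rewrite Ec; apply: (midpoint_notin_polytope HN1); rewrite -?Ec.
have -> : midpoint R a c = midpoint R c (x |: (c :\ y)) by rewrite /midpoint addrC -Ea.
by apply: (midpoint_notin_polytope HN2); rewrite -?Ea.
Qed.

Lemma exchange_stays_in_N1 a x y : a \in N1 -> a \notin N2 -> x \in a -> y \notin a ->
  y |: (a :\ x) \in M -> y |: (a :\ x) \in N1.
Proof.
move=> Ha1 Ha2 xa ya HS; case: (base_M_in_N1_or_N2 HS) => // HS2.
apply/negPn/negP => HS1; exact: (no_exchange_across Ha1 Ha2 HS2 HS1 xa ya).
Qed.

(* Consider a base p1 p2 K of N1 only and a base q1 q2 K of N2 only (all four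
   points distinct and outside K).  Then every mixed set qi pj K is a base
   of M: if, say, q2 p2 K were not, the exchanges of p1 p2 K reaching
   q1 p2 K and q2 p1 K stay in N1, which [submatroid_square] forbids. *)
Lemma mixed_corner_in_M (K : {set 'I_n}) p1 p2 q1 q2 :
  p1 \notin K -> p2 \notin K -> q1 \notin K -> q2 \notin K ->
  p1 != p2 -> q1 != q2 -> p1 != q1 -> p1 != q2 -> p2 != q1 -> p2 != q2 ->
  p1 |: (p2 |: K) \in N1 -> p1 |: (p2 |: K) \notin N2 ->
  q1 |: (q2 |: K) \in N2 -> q1 |: (q2 |: K) \notin N1 ->
  q2 |: (p2 |: K) \in M.
Proof.
move=> p1K p2K q1K q2K p12 q12 p1q1 p1q2 p2q1 p2q2 Ha1 Ha2 Hc2 Hc1.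
apply/negPn/negP => HQ.
have q1p2 : q1 != p2 by rewrite eq_sym.
apply: (submatroid_square HM HN1 base_N1_in_M p1K q1K p12 p1q1 p1q2 q12 q1p2
  Ha1 (base_N2_in_M Hc2) Hc1 HQ).
  have Ea : (p1 |: (p2 |: K)) :\ p1 = p2 |: K by rewrite setU1K // !inE negb_or p12.
  rewrite -{1 2}Ea; apply: exchange_stays_in_N1 => //; first by rewrite setU11.
  by rewrite !inE !negb_or eq_sym p1q1 eq_sym p2q1 q1K.
rewrite setUCA in Ha1 Ha2.
have Ea : (p2 |: (p1 |: K)) :\ p2 = p1 |: K by rewrite setU1K // !inE negb_or eq_sym p12.
rewrite -{1 2}Ea; apply: exchange_stays_in_N1 => //; first by rewrite setU11.
by rewrite !inE !negb_or eq_sym p2q2 eq_sym p1q2 q2K.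
Qed.

Variables (r : nat) (A : 'M['F_2]_(r, n)).
Hypothesis Hbin : forall B, B \in M -> col_basis A B.

(* For binary M the situation above is impossible: all six sets built from K
   and two of p1, p2, q1, q2 would be bases of M. *)
Lemma no_binary_square (K : {set 'I_n}) p1 p2 q1 q2 :
  p1 \notin K -> p2 \notin K -> q1 \notin K -> q2 \notin K ->
  p1 != p2 -> q1 != q2 -> p1 != q1 -> p1 != q2 -> p2 != q1 -> p2 != q2 ->
  p1 |: (p2 |: K) \in N1 -> p1 |: (p2 |: K) \notin N2 ->
  q1 |: (q2 |: K) \in N2 -> q1 |: (q2 |: K) \notin N1 -> False.
Proof.
move=> p1K p2K q1K q2K p12 q12 p1q1 p1q2 p2q1 p2q2 Ha1 Ha2 Hc2 Hc1.
have p21 : p2 != p1 by rewrite eq_sym.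
have q21 : q2 != q1 by rewrite eq_sym.
have Ha1' : p2 |: (p1 |: K) \in N1 by rewrite setUCA.
have Ha2' : p2 |: (p1 |: K) \notin N2 by rewrite setUCA.
have Hc2' : q2 |: (q1 |: K) \in N2 by rewrite setUCA.
have Hc1' : q2 |: (q1 |: K) \notin N1 by rewrite setUCA.
apply: (binary_no_U24 p1K p2K q1K q2K p12 q12 p1q1 p1q2 p2q1 p2q2); apply: Hbin.
- exact: base_N1_in_M.
- exact: base_N2_in_M.
- exact: (mixed_corner_in_M p2K p1K q2K q1K p21 q21 p2q2 p2q1 p1q2 p1q1).
- exact: (mixed_corner_in_M p1K p2K q2K q1K p12 q21 p1q2 p1q1 p2q2 p2q1).
- exact: (mixed_corner_in_M p2K p1K q1K q2K p21 q12 p2q1 p2q2 p1q1 p1q2).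
- exact: (mixed_corner_in_M p1K p2K q1K q2K p12 q12 p1q1 p1q2 p2q1 p2q2).
Qed.

(* From a common base m, one exchange leads into N1 only and another into
   N2 only.  When the two exchanges involve four distinct points, write
   K = m - x1 - x2: the two neighbours are y1 x2 K and y2 x1 K, a square
   forbidden for binary M. *)
Lemma no_split_exchanges_distinct (m : {set 'I_n}) x1 y1 x2 y2 :
  x1 \in m -> y1 \notin m -> x2 \in m -> y2 \notin m -> x1 != x2 -> y1 != y2 ->
  y1 |: (m :\ x1) \in N1 -> y1 |: (m :\ x1) \notin N2 ->
  y2 |: (m :\ x2) \in N2 -> y2 |: (m :\ x2) \notin N1 -> False.
Proof.
move=> x1m y1m x2m y2m x12 y12.
set K := m :\ x1 :\ x2.
have -> : m :\ x1 = x2 |: K by rewrite /K setD1K // !inE eq_sym x12 x2m.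
have -> : m :\ x2 = x1 |: K.
  have -> : K = m :\ x2 :\ x1 by apply/setP => i; rewrite !inE andbCA.
  by rewrite setD1K // !inE x12 x1m.
have notK i : i \notin m -> i \notin K by apply: contra; rewrite !inE => /and3P [].
have x1K : x1 \notin K by rewrite !inE eqxx andbF.
have x2K : x2 \notin K by rewrite !inE eqxx.
have neq i j : i \in m -> j \notin m -> i != j by move=> im; apply: contraNneq => <-.
apply: (no_binary_square (notK _ y1m) x2K (notK _ y2m) x1K).
- by rewrite eq_sym neq.
- by rewrite eq_sym neq.
- exact: y12.
- by rewrite eq_sym neq.
- exact: neq.
- by rewrite eq_sym.
Qed.

(* No base m has both a neighbour in N1 only and a neighbour in N2 only: when
   the exchanges share their removed or their added point, the two neighbours
   are themselves adjacent, contradicting [no_exchange_across]. *)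
Lemma no_split_exchanges (m : {set 'I_n}) x1 y1 x2 y2 :
  x1 \in m -> y1 \notin m -> x2 \in m -> y2 \notin m ->
  y1 |: (m :\ x1) \in N1 -> y1 |: (m :\ x1) \notin N2 ->
  y2 |: (m :\ x2) \in N2 -> y2 |: (m :\ x2) \notin N1 -> False.
Proof.
move=> x1m y1m x2m y2m Ha1 Ha2 Hc2 Hc1.
have neq i j : i \in m -> j \notin m -> i != j by move=> im; apply: contraNneq => <-.
have [Ex|x12] := eqVneq x1 x2; [|have [Ey|y12] := eqVneq y1 y2].
- subst x2; have [Ey|y12] := eqVneq y1 y2; first by subst y2; rewrite Hc2 in Ha2.
  apply: (no_exchange_across (y := y2) Ha1 Ha2 Hc2 Hc1 (setU11 y1 _)).
    by rewrite !inE eq_sym (negbTE y12) (negbTE y2m) andbF.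
  by rewrite setU1K // !inE negb_and y1m orbT.
- subst y2; apply: (no_exchange_across Ha1 Ha2 Hc2 Hc1 (x := x2) (y := x1)).
  + by rewrite !inE (negbTE (neq _ _ x2m y1m)) /= x2m andbT eq_sym.
  + by rewrite !inE (negbTE (neq _ _ x1m y1m)) eqxx.
  apply/setP => i; rewrite !inE.
  have [->|ix1] := eqVneq i x1; first by rewrite x12 x1m orbT.
  by have [->|iy1] := eqVneq i y1 => //=; rewrite eq_sym neq.
- exact: (no_split_exchanges_distinct x1m y1m x2m y2m x12 y12 Ha1 Ha2 Hc2 Hc1).
Qed.

(* Walking from a base of N1 only towards a base c0 of N2 by exchanges in M,
   one stays in N1 (by [no_exchange_across]) until reaching a base common to
   N1 and N2; this yields a base of N1 only adjacent to a common base. *)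
Lemma exchange_into_common a0 c0 : a0 \in N1 -> a0 \notin N2 -> c0 \in N2 ->
  exists a x y,
    [/\ a \in N1 :\: N2, x \in a, y \notin a & y |: (a :\ x) \in N1 :&: N2].
Proof.
move=> Ha01 Ha02 Hc0.
have diff_nonempty B : B \in N1 -> B \notin N2 -> exists x, x \in B :\: c0.
  move=> HB1 HB2; have [H0|[x xB]] := set_0Vmem (B :\: c0); last by exists x.
  by rewrite (base_diff0_eq HM (base_N1_in_M HB1) (base_N2_in_M Hc0) H0) Hc0 in HB2.
move: {2}#|a0 :\: c0| (leqnn #|a0 :\: c0|) => k.
elim: k a0 Ha01 Ha02 => [|k IH] a Ha1 Ha2 Hk; have [x xac] := diff_nonempty a Ha1 Ha2.
  by move: Hk; rewrite leqn0 cards_eq0 => /eqP H0; rewrite H0 inE in xac.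
case: HM => _ Hex; have [y yca HS] := Hex _ _ (base_N1_in_M Ha1) (base_N2_in_M Hc0) x xac.
have /setDP [xa _] := xac; have /setDP [yc ya] := yca.
have HS1 := exchange_stays_in_N1 Ha1 Ha2 xa ya HS.
have [HS2|HS2] := boolP (y |: (a :\ x) \in N2).
  by exists a, x, y; rewrite !inE Ha1 Ha2 HS1 HS2.
apply: (IH _ HS1 HS2); rewrite exchange_closer //.
by rewrite -ltnS prednK ?card_gt0; [|apply/set0Pn; exists x].
Qed.

Lemma neighbours_of_common_base a x y : a \in N1 :\: N2 -> x \in a -> y \notin a ->
  forall x' y', x' \in y |: (a :\ x) -> y' \notin y |: (a :\ x) ->
  y' |: ((y |: (a :\ x)) :\ x') \in N2 -> y' |: ((y |: (a :\ x)) :\ x') \in N1.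
Proof.
move=> /setDP [Ha1 Ha2] xa ya x' y' x'm y'm HS2; apply/negPn/negP => HS1.
have [ym xm Ea] := exchange_reverse xa ya; rewrite Ea in Ha1 Ha2.
exact: (no_split_exchanges ym xm x'm y'm Ha1 Ha2 HS2 HS1).
Qed.

(* Faces: let c.x <= b be the inequality cutting P(N1) /\ P(N2) out of
   P(N2).  It is tight at a common base m and, when all N2-neighbours of m
   are in N1, at all those neighbours; by [all_bases_max_weight] it is then
   tight on all of P(N2), so every base of N2 is a base of N1. *)
Lemma face_at_common_base m :
  is_face R n (fun z => base_polytope R n N1 z /\ base_polytope R n N2 z)
    (base_polytope R n N2) ->
  m \in N1 :&: N2 ->
  (forall x y, x \in m -> y \notin m -> y |: (m :\ x) \in N2 -> y |: (m :\ x) \in N1) ->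
  {subset N2 <= N1}.
Proof.
move=> [c [b [Hle Hface]]] /setIP [Hm1 Hm2] Hnb.
have common D : D \in N1 -> D \in N2 -> weight (fun i => c 0 i) D = b.
  move=> H1 H2; rewrite -dotv_indic.
  have Hboth := conj (indic_in_polytope R H1) (indic_in_polytope R H2).
  by have [_ ->] := proj1 (Hface _) Hboth.
move=> D HD.
suff [/indic_in_polytopeP //] :
  base_polytope R n N1 (indic R n D) /\ base_polytope R n N2 (indic R n D).
apply/Hface; split; first exact: indic_in_polytope.
rewrite dotv_indic; apply: (all_bases_max_weight HN2 _ Hm2 (common _ Hm1 Hm2)) => //.
  by move=> B HB; rewrite -dotv_indic; apply/Hle/indic_in_polytope.
by move=> x y xm ym HS; apply: common => //; apply: Hnb.
Qed.
End Split.

Theorem theorem3 (R : realFieldType) (n : nat) (M : {set {set 'I_n}}) :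
  is_matroid n M -> binary n M ->
  ~ exists N1 N2 : {set {set 'I_n}}, nontrivial_split R n M N1 N2.
Proof.
move=> HM [r [A HA]] [N1 [N2 [[HN1 [HN2 [Hcov [_ Hface2]]]] [Hne1 Hne2]]]].
have Hbin B : B \in M -> col_basis A B.
  by case/HA => Hrank Hcard; split; rewrite -?rank_colsub_span.
have N1_or_N2 := base_M_in_N1_or_N2 Hcov.
have [c0 c0M c0N1] := polytope_ne_base (fun x H => proj2 (Hcov x) (or_introl H)) Hne1.
have c0N2 : c0 \in N2 by case: (N1_or_N2 _ c0M) => // c0N1'; rewrite c0N1' in c0N1.
have [a0 a0M a0N2] := polytope_ne_base (fun x H => proj2 (Hcov x) (or_intror H)) Hne2.
have a0N1 : a0 \in N1 by case: (N1_or_N2 _ a0M) => // a0N2'; rewrite a0N2' in a0N2.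
have [a [x [y [Ha xa ya Hm]]]] := exchange_into_common HM HN1 HN2 Hcov a0N1 a0N2 c0N2.
have N2N1 := face_at_common_base HN2 Hface2 Hm
  (neighbours_of_common_base HM HN1 HN2 Hcov Hbin Ha xa ya).
by rewrite N2N1 in c0N1.
Qed.
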